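(* Let $K$ be a field of characteristic $0$, let $W\le S_d$ be a permutation group and let $\chi$ be a one-dimensional character of $W$. For every $n\in\mathbb N_0$, $$g_n(\chi;x_0,\dots,x_n)=Z(\chi;p_1,\dots,p_d),$$ where $p_s=x_0^s+\cdots+x_n^s$ are the power sums in the $n+1$ variables $x_0,\dots,x_n$.
   Context: A one-dimensional character of $W$ is a homomorphism $W\to K^\times$. $\mathbb N_0=\{0,1,2,\dots\}$, $[0,n]=\{0,1,\dots,n\}$. $W$ acts on $[0,n]^d$ by $\sigma(i_1,\dots,i_d)=(i_{\sigma^{-1}(1)},\dots,i_{\sigma^{-1}(d)})$. $J(n,d,\chi)$ is the set of those $j\in[0,n]^d$ that are lexicographically minimal in their $W$-orbit and satisfy $\chi(\sigma)=1$ for all $\sigma$ in the stabilizer $W_j$. $g_n(\chi;x_0,\dots,x_n)=\sum_{j\in J(n,d,\chi)}x_{j_1}\cdots x_{j_d}$. $Z(\chi;p_1,\dots,p_d)=|W|^{-1}\sum_{\sigma\in W}\chi(\sigma)p_1^{c_1(\sigma)}\cdots p_d^{c_d(\sigma)}$, where $c_s(\sigma)$ is the number of cycles of length $s$ of $\sigma$. *)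

From HB Require Import structures.
From mathcomp Require Import all_boot all_order all_algebra all_fingroup.
From mathcomp Require Import mpoly.
Set Implicit Arguments. Unset Strict Implicit. Unset Printing Implicit Defensive.
Import GRing.Theory.
Local Open Scope ring_scope.

Definition midx (n d : nat) := {ffun 'I_d -> 'I_n.+1}.

Definition pact (n d : nat) (s : {perm 'I_d}) (j : midx n d) : midx n d :=
  [ffun k => j ((s^-1)%g k)].

Definition lexle (n d : nat) (j j' : midx n d) : bool :=
  (j == j') ||
  [exists k : 'I_d, [forall l : 'I_d, (l < k)%N ==> (j l == j' l)] && (j k < j' k)%N].

Definition one_dim_char (K : fieldType) (d : nat) (W : {group {perm 'I_d}})
    (chi : {perm 'I_d} -> K) : Prop :=
  (forall s, s \in W -> chi s != 0) /\
  (forall s t, s \in W -> t \in W -> chi (s * t)%g = chi s * chi t).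

Definition Jset (K : fieldType) (n d : nat) (W : {group {perm 'I_d}})
    (chi : {perm 'I_d} -> K) : {set midx n d} :=
  [set j : midx n d |
     [forall s in W, lexle j (pact s j)] &&
     [forall s in W, (pact s j == j) ==> (chi s == 1)]].

Definition g_poly (K : fieldType) (n d : nat) (W : {group {perm 'I_d}})
    (chi : {perm 'I_d} -> K) : {mpoly K[n.+1]} :=
  \sum_(j in Jset n W chi) \prod_(k < d) 'X_(j k).

Definition ncycles (d : nat) (sigma : {perm 'I_d}) (s : nat) : nat :=
  #|[set C in porbits sigma | #|C| == s]|.

Definition psum (K : fieldType) (n s : nat) : {mpoly K[n.+1]} :=
  \sum_(i < n.+1) 'X_i ^+ s.

Definition Z_poly (K : fieldType) (n d : nat) (W : {group {perm 'I_d}})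
    (chi : {perm 'I_d} -> K) : {mpoly K[n.+1]} :=
  (#|W|%:R)^-1 *: \sum_(sigma in W)
     chi sigma *: \prod_(1 <= s < d.+1) psum K n s ^+ ncycles sigma s.

(* Expanding the product of the power sums p_|C| over the cycles C of sigma
   gives the sum of the monomials x^j over the multi-indices j fixed by sigma,
   so |W| Z = sum_j (sum_(sigma in W_j) chi(sigma)) x^j.  The inner sum is
   |W_j| if chi is trivial on the stabiliser W_j and 0 otherwise, and it is
   constant on W-orbits, as is x^j.  Hence each orbit contributes
   |orbit| |W_j| = |W| times the monomial of its lexicographically least
   element, which lies in J(n,d,chi) exactly when chi is trivial on its
   stabiliser. *)

From HB Require Import structures.
From mathcomp Require Import all_boot all_order all_algebra all_fingroup.
From mathcomp Require Import mpoly.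

Set Implicit Arguments.
Unset Strict Implicit.
Unset Printing Implicit Defensive.

Import GRing.Theory.
Local Open Scope ring_scope.

Section LexicographicOrder.
Variables n d : nat.
Implicit Types a b c : midx n d.

Lemma lexle_refl a : lexle a a.
Proof. by rewrite /lexle eqxx. Qed.

Lemma lexle_anti : antisymmetric (@lexle n d).
Proof.
move=> a b; rewrite /lexle; case: eqP => [//|_] /=.
case/andP=> /existsP[k1 /andP[/forallP eq1 lt1]].
case: eqP => [->//|_] /= /existsP[k2 /andP[/forallP eq2 lt2]].
case: (ltngtP k1 k2) => [k12|k21|/val_inj k12].
- by move: (eq2 k1); rewrite k12 => /eqP ab; rewrite ab ltnn in lt1.
- by move: (eq1 k2); rewrite k21 => /eqP ab; rewrite ab ltnn in lt2.
- by subst k2; move: (ltn_trans lt1 lt2); rewrite ltnn.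
Qed.

Lemma lexle_trans : transitive (@lexle n d).
Proof.
move=> b a c; rewrite /lexle.
case: (eqVneq a b) => [->//|_] /= /existsP[k1 /andP[/forallP eq1 lt1]].
have eq_ab (l : 'I_d) : (l < k1)%N -> a l = b l.
  by move=> lk; apply/eqP/(implyP (eq1 l)).
case: (eqVneq b c) => [<- _|_] /=.
  by apply/orP; right; apply/existsP; exists k1; rewrite lt1 andbT; apply/forallP.
case/existsP=> k2 /andP[/forallP eq2 lt2].
have eq_bc (l : 'I_d) : (l < k2)%N -> b l = c l.
  by move=> lk; apply/eqP/(implyP (eq2 l)).
apply/orP; right; apply/existsP; exists (if (k1 < k2)%N then k1 else k2).
apply/andP; split.
  apply/forall_inP => l /=; case: ifP => k12 lk.
    by rewrite eq_ab // eq_bc // (ltn_trans lk k12).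
  have lk1 : (l < k1)%N by rewrite (leq_trans lk) // leqNgt k12.
  by rewrite eq_ab // eq_bc.
case: (ltngtP k1 k2) => [k12|k21|/val_inj k12].
- by rewrite -eq_bc.
- by rewrite eq_ab.
- by subst k2; apply: ltn_trans lt2.
Qed.

Lemma lexle_total : total (@lexle n d).
Proof.
move=> a b; case: (eqVneq a b) => [->|nab]; first by rewrite lexle_refl.
have [k0 nk0] : exists k, a k != b k.
  apply/existsP; apply: contraR nab => /existsPn same.
  by apply/eqP/ffunP => k; apply/eqP/negPn.
case: (@arg_minnP _ k0 (fun k => a k != b k) val nk0) => k nk kmin.
have eq_ab (l : 'I_d) : (l < k)%N -> a l = b l.
  by move=> lk; apply/eqP; apply: contraTT lk => /kmin; rewrite -leqNgt.
rewrite /lexle (negbTE nab) eq_sym (negbTE nab) /=.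
case: (ltngtP (a k) (b k)) => [ab|ba|/val_inj ab]; last by rewrite ab eqxx in nk.
- apply/orP; left; apply/existsP; exists k; rewrite ab andbT.
  by apply/forall_inP => l /eq_ab ->.
- apply/orP; right; apply/existsP; exists k; rewrite ba andbT.
  by apply/forall_inP => l /eq_ab ->.
Qed.

End LexicographicOrder.

Section OrbitMinima.
Variables (aT : finGroupType) (T : finType) (to : {action aT &-> T}).
Variables (G : {group aT}) (r : rel T).
Hypotheses (r_anti : antisymmetric r) (r_trans : transitive r) (r_total : total r).

Lemma ex_rel_min (A : {set T}) x : x \in A ->
  exists2 m, m \in A & {in A, forall y, r m y}.
Proof.
move=> xA; have sorted_A := sort_sorted r_total (enum A).
have mem_sort_A := mem_sort r (enum A).
case: (sort r (enum A)) => [|m s] in sorted_A mem_sort_A *.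
  by move: (mem_sort_A x); rewrite mem_enum xA.
have r_refl y : r y y by case/orP: (r_total y y).
exists m => [|y]; first by rewrite -mem_enum -mem_sort_A mem_head.
rewrite -mem_enum -mem_sort_A inE => /predU1P[->//|ys].
by move/allP: (order_path_min r_trans sorted_A); apply.
Qed.

Definition orbit_min : {set T} := [set x | [forall a in G, r x (to x a)]].

Lemma orbit_minP x : exists2 m, m \in orbit_min & m \in orbit to G x.
Proof.
have [m mx m_min] := ex_rel_min (orbit_refl to G x).
exists m => //; rewrite inE; apply/forall_inP => a aG.
by apply: m_min; rewrite -(orbit_eqP mx) mem_orbit.
Qed.

Lemma orbit_min_inj : {in orbit_min &, injective (orbit to G)}.
Proof.
move=> m1 m2; rewrite !inE => /forall_inP min1 + orbit12.
have /orbitP[a aG <-] : m2 \in orbit to G m1 by rewrite orbit12 orbit_refl.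
move=> /forall_inP min2.
by apply: r_anti; rewrite min1 //= -{2}(actK to a m1) min2 ?groupV.
Qed.

Lemma big_orbit_min (V : nmodType) (F : T -> V) :
  \sum_x F x = \sum_(m in orbit_min) \sum_(x in orbit to G m) F x.
Proof.
rewrite (partition_big_imset (orbit to G)).
have -> : orbit to G @: predT = orbit to G @: orbit_min.
  apply/setP => O; apply/imsetP/imsetP => [[x _ ->]|[m _ ->]]; last by exists m.
  have [m m_min mx] := orbit_minP x.
  by exists m; rewrite // (orbit_eqP mx).
rewrite big_imset; last exact: orbit_min_inj.
apply: eq_bigr => m _; apply: eq_bigl => x.
by apply/eqP/idP => [<-|/orbit_eqP//]; apply: orbit_refl.
Qed.

End OrbitMinima.

Section PermutationCycles.
Variables (R : comPzSemiRingType) (d : nat) (s : {perm 'I_d}).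

Lemma prod_porbits_card (F : nat -> R) :
  \prod_(C in porbits s) F #|C| = \prod_(1 <= l < d.+1) F l ^+ ncycles s l.
Proof.
have card_lt (C : {set 'I_d}) : (#|C| < d.+1)%N.
  by rewrite ltnS -[X in (_ <= X)%N]card_ord max_card.
have ncycles0 : ncycles s 0 = 0%N.
  apply/eqP; rewrite cards_eq0; apply/eqP/setP => C; rewrite !inE.
  by apply/negbTE/andP => -[/imsetP[x _ ->]]; rewrite (negbTE (card_porbit_neq0 s x)).
rewrite (partition_big (fun C : {set 'I_d} => inord #|C| : 'I_d.+1) predT) //=.
rewrite (eq_bigr (fun l : 'I_d.+1 => F l ^+ ncycles s l)) => [|l _].
  by rewrite big_ord_recl ncycles0 expr0 mul1r [RHS]big_add1 big_mkord.
rewrite (eq_bigr (fun _ => F l)) => [|C /andP[_ /eqP <-]]; last by rewrite inordK.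
rewrite prodr_const; congr (_ ^+ _); apply: eq_card => C.
rewrite inE; apply: andb_id2l => _.
by rewrite -val_eqE /= inordK.
Qed.

Variable n : nat.
Implicit Types (j : midx n d) (f : {ffun {set 'I_d} -> 'I_n.+1}).
Implicit Types (k y : 'I_d) (C : {set 'I_d}).

Definition porbit_midx f : midx n d := [ffun k => f (porbit s k)].

(* [ord0] off the cycles of [s], as for the partial functions in
   [pffun_on ord0 (porbits s) predT]. *)
Definition midx_porbit j : {ffun {set 'I_d} -> 'I_n.+1} :=
  [ffun C : {set 'I_d} =>
     if [pick k in C | C \in porbits s] is Some k then j k else ord0].

Lemma porbit_inv_perm k : porbit s ((s^-1)%g k) = porbit s k.
Proof.
by apply/eqP; rewrite eq_porbit_mem -porbitV -{1}[(s^-1)%g]expg1 mem_porbit.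
Qed.

Lemma pact_porbit_midx f : pact s (porbit_midx f) = porbit_midx f.
Proof. by apply/ffunP => k; rewrite !ffunE porbit_inv_perm. Qed.

Lemma pact_fixed_porbit j k y :
  pact s j = j -> y \in porbit s k -> j y = j k.
Proof.
move=> fix_j; have fix_jV z : j ((s^-1)%g z) = j z by rewrite -{2}fix_j ffunE.
rewrite -porbitV => /porbitP[i ->]; elim: i => [|i IHi].
  by rewrite expg0 perm1.
by rewrite expgSr permM fix_jV.
Qed.

Lemma mem_porbits C k : C \in porbits s -> (k \in C) = (porbit s k == C).
Proof. by case/imsetP => x _ ->; rewrite eq_porbit_mem. Qed.

Lemma midx_porbitK j : pact s j = j -> porbit_midx (midx_porbit j) = j.
Proof.
move=> fix_j; apply/ffunP => k; rewrite !ffunE.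
case: pickP => [y /andP[yk _]|/(_ k)]; last by rewrite porbit_id imset_f.
exact: pact_fixed_porbit.
Qed.

Lemma porbit_midxK f :
  (midx_porbit (porbit_midx f) == f) = (f \in pffun_on ord0 (porbits s) predT).
Proof.
apply/eqP/pffun_onP => [<-|[/supportP f0 _]].
  split=> [|//]; apply/supportP => C; rewrite ffunE.
  by case: pickP => [k /andP[_ ->]|].
apply/ffunP => C; rewrite !ffunE; case: pickP => [k /andP[kC CP]|no_k].
  by rewrite ffunE; move: kC; rewrite mem_porbits // => /eqP->.
rewrite f0 //; apply: contraT; rewrite negbK => /imsetP[k _ Ck].
by move: (no_k k); rewrite Ck porbit_id imset_f.
Qed.

Lemma prod_porbit_midx (x : 'I_n.+1 -> R) f :
  \prod_(C in porbits s) x (f C) ^+ #|C| = \prod_(k < d) x (porbit_midx f k).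
Proof.
rewrite [RHS](partition_big (porbit s) (mem (porbits s))) => [|k _].
  2: exact: imset_f.
apply: eq_bigr => C CP; rewrite -(prodr_const (mem C)).
by apply: eq_big => [k|k]; rewrite ?ffunE mem_porbits // => /eqP->.
Qed.

Lemma prod_psum_porbits (x : 'I_n.+1 -> R) :
  \prod_(C in porbits s) \sum_(i < n.+1) x i ^+ #|C| =
  \sum_(j | pact s j == j) \prod_(k < d) x (j k).
Proof.
rewrite (big_distr_big ord0) (reindex_onto porbit_midx midx_porbit); last first.
  by move=> j /eqP; apply: midx_porbitK.
apply: eq_big => [f|f _]; first by rewrite pact_porbit_midx eqxx porbit_midxK.
exact: prod_porbit_midx.
Qed.

End PermutationCycles.

Section PermutationAction.
Variables n d : nat.

Lemma pact1 (j : midx n d) : pact 1 j = j.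
Proof. by apply/ffunP => k; rewrite ffunE invg1 perm1. Qed.

Lemma pactM (j : midx n d) s t : pact (s * t) j = pact t (pact s j).
Proof. by apply/ffunP => k; rewrite !ffunE invMg permM. Qed.

Definition pact_action := @TotalAction _ _ (fun j s => pact s j) pact1 pactM.

Lemma mem_stab_pact (G : {group {perm 'I_d}}) (j : midx n d) s :
  (s \in 'C_G[j | pact_action]%g) = (s \in G) && (pact s j == j).
Proof. by rewrite inE; congr (_ && _); apply/astab1P/eqP. Qed.

Lemma prod_pact (R : comPzSemiRingType) (x : 'I_n.+1 -> R) s (j : midx n d) :
  \prod_(k < d) x (pact s j k) = \prod_(k < d) x (j k).
Proof.
rewrite (reindex_inj (@perm_inj _ s)); apply: eq_bigr => k _.
by rewrite ffunE permK.
Qed.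

End PermutationAction.

Section OneDimensionalCharacter.
Variables (K : fieldType) (d : nat) (W : {group {perm 'I_d}}).
Variables (chi : {perm 'I_d} -> K).
Hypothesis chi_lin : one_dim_char W chi.

Lemma one_dim_char1 : chi 1 = 1.
Proof.
have [chi_neq0 chiM] := chi_lin.
by apply: (mulfI (chi_neq0 _ (group1 W))); rewrite -chiM ?mulg1 ?mulr1.
Qed.

Lemma one_dim_charJ s a : s \in W -> a \in W -> chi (s ^ a)%g = chi s.
Proof.
have [_ chiM] := chi_lin; move=> sW aW.
rewrite conjgE !chiM ?groupM ?groupV // mulrCA -chiM ?groupV //.
by rewrite mulVg one_dim_char1 mulr1.
Qed.

Lemma sum_one_dim_char (H : {group {perm 'I_d}}) : H \subset W ->
  \sum_(s in H) chi s = if [forall s in H, chi s == 1] then #|H|%:R else 0.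
Proof.
move=> sHW; case: ifPn => [/forall_inP chi_triv | /forall_inPn[t tH chit_neq1]].
  by rewrite -sum1_card natr_sum; apply: eq_bigr => s /chi_triv/eqP.
have tW := subsetP sHW t tH.
have sum_chiM : \sum_(s in H) chi s = chi t * \sum_(s in H) chi s.
  rewrite [LHS](reindex_inj (mulgI t)) mulr_sumr.
  apply: eq_big => [s|s]; first by rewrite /= groupMl.
  by rewrite /= groupMl // => /(subsetP sHW) sW; rewrite chi_lin.2.
have : (1 - chi t) * \sum_(s in H) chi s = 0.
  by rewrite mulrBl mul1r -sum_chiM subrr.
by move/eqP; rewrite mulf_eq0 subr_eq0 eq_sym (negbTE chit_neq1) => /eqP.
Qed.

Lemma sum_one_dim_char_conj (H : {set {perm 'I_d}}) a :
  H \subset W -> a \in W -> \sum_(s in (H :^ a)%g) chi s = \sum_(s in H) chi s.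
Proof.
move=> sHW aW; rewrite (reindex_inj (conjg_inj a)).
apply: eq_big => [s|s]; rewrite /= memJ_conjg // => /(subsetP sHW) sW.
exact: one_dim_charJ.
Qed.

Variable n : nat.
Local Notation to := (pact_action n d).
Local Notation stab_char j := (\sum_(s in 'C_W[j | to]%g) chi s).
Local Notation monomial j := (\prod_(k < d) ('X_(j k) : {mpoly K[n.+1]})).

Lemma stab_char_act j a : a \in W -> stab_char (to j a) = stab_char j.
Proof.
move=> aW; rewrite astab1_act -{1}(conjGid aW) -conjIg.
by rewrite sum_one_dim_char_conj ?subsetIl.
Qed.

Lemma sum_orbit_stab_char m :
  \sum_(x in orbit to W m) stab_char x *: monomial x =
  (if [forall s in 'C_W[m | to]%g, chi s == 1] then #|W|%:R else 0) *: monomial m.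
Proof.
rewrite (eq_bigr (fun _ => stab_char m *: monomial m)) => [|_ /orbitP[a aW <-]].
  rewrite sumr_const scalerMnl sum_one_dim_char ?subsetIl //.
  by case: ifP; rewrite ?mul0rn // -mulr_natr -natrM mulnC card_orbit_stab.
by rewrite (stab_char_act _ aW) (prod_pact (fun i => 'X_i) a m).
Qed.

Lemma Jset_orbit_min j : (j \in Jset n W chi) =
  (j \in orbit_min to W (@lexle n d)) && [forall s in 'C_W[j | to]%g, chi s == 1].
Proof.
rewrite !inE; congr (_ && _).
apply/forall_inP/forall_inP => [chi_triv s | chi_triv s sW].
  by rewrite mem_stab_pact => /andP[sW fix_j]; apply: (implyP (chi_triv s sW)).
by apply/implyP => fix_j; apply: chi_triv; rewrite mem_stab_pact sW.
Qed.

Lemma g_poly_stab_char :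
  #|W|%:R *: g_poly n W chi = \sum_j stab_char j *: monomial j.
Proof.
rewrite (big_orbit_min to W (@lexle_anti n d) (@lexle_trans n d) (@lexle_total n d)).
rewrite /g_poly scaler_sumr (eq_bigl _ _ Jset_orbit_min) big_mkcondr.
apply: eq_bigr => m _; rewrite sum_orbit_stab_char.
by case: ifP; rewrite ?scale0r.
Qed.

Lemma Z_poly_stab_char :
  Z_poly n W chi = #|W|%:R^-1 *: \sum_j stab_char j *: monomial j.
Proof.
rewrite /Z_poly; congr (_ *: _).
under eq_bigr => s _ do rewrite -prod_porbits_card /psum prod_psum_porbits scaler_sumr.
rewrite (exchange_big_dep predT) //=; apply: eq_bigr => j _.
by rewrite scaler_suml; apply: eq_bigl => s; rewrite mem_stab_pact.
Qed.

End OneDimensionalCharacter.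

Theorem corollary2p1p4 (K : fieldType) (d : nat) (W : {group {perm 'I_d}})
    (chi : {perm 'I_d} -> K) :
  [pchar K] =i pred0 ->
  one_dim_char W chi ->
  forall n : nat, g_poly n W chi = Z_poly n W chi.
Proof.
move=> char0 chi_lin n; have W_neq0 : #|W|%:R != 0 :> K.
  by move/pcharf0P: char0 => ->; rewrite -lt0n cardG_gt0.
by rewrite Z_poly_stab_char -g_poly_stab_char // scalerA mulVf ?scale1r.
Qed.
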